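(* Let $(\mathcal A,\phi)$ be a noncommutative probability space and $U,V\in\mathcal A$ unitaries. Then: (1) $j_{U^{-1}}=j_U\circ\Sigma$ and $j_{UV}=j_U\star j_V$; (2) if $U$ and $V$ are $*$-free in $(\mathcal A,\phi)$, then the image $*$-algebras $j_U(U_n^{nc})$ and $j_V(U_n^{nc})$ are $*$-free in the noncommutative probability space $\big(E_{11}(\mathcal A\sqcup M_n(\mathbb C))E_{11},\,n(\phi*\mathrm{tr}_n)\big)$.
   Context: A noncommutative probability space $(\mathcal A,\phi)$ is a unital $*$-algebra with a state. $M_n(\mathbb C)$ carries the normalized trace $\mathrm{tr}_n=\frac1n\mathrm{Tr}$; $E_{ij}$ are the matrix units. $\mathcal A\sqcup M_n(\mathbb C)$ is the free product of unital $*$-algebras with the free product state $\phi*\mathrm{tr}_n$ (the unique unital functional vanishing on alternating products of centered elements). $E_{11}(\mathcal A\sqcup M_n(\mathbb C))E_{11}=\{E_{11}XE_{11}\}$ is a $*$-algebra with unit $E_{11}$, equipped with the state $n(\phi*\mathrm{tr}_n)$. $U_n^{nc}$ is the universal unital $*$-algebra generated by $u_{ij}$ ($1\le i,j\le n$) with $\sum_k u_{ki}^*u_{kj}=\delta_{ij}=\sum_k u_{ik}u_{jk}^*$; $\Delta(u_{ij})=\sum_ku_{ik}^{(1)}u_{kj}^{(2)}$ (into $U_n^{nc}\sqcup U_n^{nc}$), $\Sigma(u_{ij})=u_{ji}^*$. For unital $*$-homomorphisms $j_1,j_2:U_n^{nc}\to\mathcal B$, $j_1\star j_2=(j_1\sqcup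 j_2)\circ\Delta$. For a unitary $U\in\mathcal A$, $j_U:U_n^{nc}\to E_{11}(\mathcal A\sqcup M_n(\mathbb C))E_{11}$ is the unique unital $*$-homomorphism with $j_U(u_{ij})=E_{1i}UE_{j1}$. Subalgebras are $*$-free if the state restricted to the algebra they generate is the free product of the restrictions. *)

From HB Require Import structures.
From mathcomp Require Import all_boot all_order all_algebra.
Set Implicit Arguments. Unset Strict Implicit. Unset Printing Implicit Defensive.
Import Order.TTheory GRing.Theory Num.Theory.
Local Open Scope ring_scope.

(* Unital *-algebras over a numeric closed field C (standing for the  *)
(* complex numbers).                                     *)
Record starAlg (C : numClosedFieldType) := StarAlg {
  sa_car :> algType C;
  sa_star : sa_car -> sa_car;
  sa_starK : involutive sa_star;
  sa_starD : forall x y, sa_star (x + y) = sa_star x + sa_star y;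
  sa_starZ : forall (c : C) x, sa_star (c *: x) = (Num.conj c) *: sa_star x;
  sa_starM : forall x y, sa_star (x * y) = sa_star y * sa_star x
}.
Arguments sa_star {C} s _.
Notation star x := (sa_star _ x).

Section Defs.
Variable C : numClosedFieldType.

Definition unital_star_hom (A B : starAlg C) (f : A -> B) : Prop :=
  [/\ forall x y, f (x + y) = f x + f y,
      forall (c : C) x, f (c *: x) = c *: f x,
      forall x y, f (x * y) = f x * f y,
      f 1 = 1 &
      forall x, f (star x) = star (f x)].

(* unital *-homomorphism into the corner algebra  p B p  (whose unit is p),
   viewed as a map into B. *)
Definition corner_star_hom (A B : starAlg C) (p : B) (f : A -> B) : Prop :=
  [/\ forall x y, f (x + y) = f x + f y,
      forall (c : C) x, f (c *: x) = c *: f x,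
      forall x y, f (x * y) = f x * f y,
      f 1 = p &
      forall x, f (star x) = star (f x)].

Definition lin_functional (A : starAlg C) (phi : A -> C) : Prop :=
  (forall x y, phi (x + y) = phi x + phi y) /\
  (forall (c : C) x, phi (c *: x) = c * phi x).

Definition is_state (A : starAlg C) (phi : A -> C) : Prop :=
  [/\ lin_functional phi, phi 1 = 1 & forall x, 0 <= phi (star x * x)].

Definition unitary (A : starAlg C) (U : A) : Prop :=
  U * star U = 1 /\ star U * U = 1.

Inductive genStar (A : starAlg C) (S : A -> Prop) : A -> Prop :=
  | genStar_in x : S x -> genStar S x
  | genStar_1 : genStar S 1
  | genStar_add x y : genStar S x -> genStar S y -> genStar S (x + y)
  | genStar_scale (c : C) x : genStar S x -> genStar S (c *: x)
  | genStar_mul x y : genStar S x -> genStar S y -> genStar S (x * y)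
  | genStar_star x : genStar S x -> genStar S (star x).

Definition free_pair (B : starAlg C) (psi : B -> C) (P1 P2 : B -> Prop) : Prop :=
  forall s : seq (bool * B),
    (0 < size s)%N ->
    (forall k, (k.+1 < size s)%N ->
       (nth (true, 0) s k).1 != (nth (true, 0) s k.+1).1) ->
    (forall k, (k < size s)%N ->
       let x := nth (true, 0) s k in
       (if x.1 then P1 x.2 else P2 x.2) /\ psi x.2 = 0) ->
    psi (\prod_(x <- s) x.2) = 0.

Definition range (A B : Type) (f : A -> B) : B -> Prop :=
  fun y => exists x, y = f x.

Definition is_free_product (A1 A2 P : starAlg C) (i1 : A1 -> P) (i2 : A2 -> P)
  : Prop :=
  [/\ unital_star_hom i1, unital_star_hom i2 &
      forall (T : starAlg C) (f1 : A1 -> T) (f2 : A2 -> T),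
        unital_star_hom f1 -> unital_star_hom f2 ->
        exists! h : P -> T,
          [/\ unital_star_hom h, forall x, h (i1 x) = f1 x
            & forall x, h (i2 x) = f2 x]].

Definition is_free_product_state (A1 A2 P : starAlg C) (i1 : A1 -> P)
  (i2 : A2 -> P) (phi1 : A1 -> C) (phi2 : A2 -> C) (psi : P -> C) : Prop :=
  [/\ lin_functional psi, psi 1 = 1,
      forall x, psi (i1 x) = phi1 x,
      forall x, psi (i2 x) = phi2 x &
      free_pair psi (range i1) (range i2)].

Definition unitary_rel (m : nat) (T : starAlg C) (v : 'I_m -> 'I_m -> T) : Prop :=
  (forall i j, \sum_(k < m) star (v k i) * v k j = (i == j)%:R) /\
  (forall i j, \sum_(k < m) v i k * star (v j k) = (i == j)%:R).

Definition is_Unc (m : nat) (Un : starAlg C) (u : 'I_m -> 'I_m -> Un) : Prop :=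
  unitary_rel u /\
  forall (T : starAlg C) (v : 'I_m -> 'I_m -> T), unitary_rel v ->
    exists! h : Un -> T, unital_star_hom h /\ forall i j, h (u i j) = v i j.

Definition mx_star (n : nat) (M : 'M[C]_n.+1) : 'M[C]_n.+1 :=
  (map_mx Num.conj M)^T.

Lemma mx_starK n : involutive (@mx_star n).
Proof.
move=> M; rewrite /mx_star map_trmx trmxK; apply/matrixP=> i j.
by rewrite !mxE conjCK.
Qed.

Lemma mx_starD n (M N : 'M[C]_n.+1) : mx_star (M + N) = mx_star M + mx_star N.
Proof. by rewrite /mx_star map_mxD linearD. Qed.

Lemma mx_starZ n (c : C) (M : 'M[C]_n.+1) :
  mx_star (c *: M) = (Num.conj c) *: mx_star M.
Proof. by rewrite /mx_star map_mxZ linearZ. Qed.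

Lemma mx_starM n (M N : 'M[C]_n.+1) : mx_star (M * N) = mx_star N * mx_star M.
Proof. by rewrite /mx_star -!mulmxE map_mxM trmx_mul. Qed.

Definition Mstar (n : nat) : starAlg C :=
  @StarAlg C 'M[C]_n.+1 (@mx_star n) (@mx_starK n) (@mx_starD n)
    (@mx_starZ n) (@mx_starM n).

Definition ntr (n : nat) (M : Mstar n) : C := (n.+1)%:R^-1 * \tr M.

Definition Eu (n : nat) (i j : 'I_n.+1) : Mstar n := delta_mx i j.

End Defs.

(* Proof idea.
   (1) Both sides are unital *-homomorphisms into the corner E11 B E11 which
   agree on the generators u_ij (for the coproduct because
   sum_k E_k1 E_1k = 1), and such homomorphisms are determined by their values
   on the generators.  Every element of Alg(iA(S_X), iM(M_n)) is a
   combination of elements of iM(M_n) and of words m_0 a_1 m_1 ... a_k m_k,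
   with the a_i centered in iA(S_X) and the m_i between them centered in
   iM(M_n).  Compressing by E11, whose trace 1/n is nonzero, shows that a
   centered element of the range is a combination of such words.  An
   alternating product of words for U and for V is a word mixing both
   colours, with arbitrary M-letters between A-letters of different colours,
   and psi vanishes on all of these: split each non-centered M-letter as
   (m - psi m) + psi m and induct; when all M-letters are centered, adjacent
   A-letters multiply into alternating products of centered elements of S_U
   and S_V, centered by freeness of U and V, and freeness of A and M_n
   concludes. *)

From HB Require Import structures.
From mathcomp Require Import all_boot all_order all_algebra.
From mathcomp Require Import boolp.
Set Implicit Arguments. Unset Strict Implicit. Unset Printing Implicit Defensive.
Import Order.TTheory GRing.Theory Num.Theory.
Local Open Scope ring_scope.

Section StarAlgebraFacts.
Variable C : numClosedFieldType.
Implicit Types A B : starAlg C.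

Lemma morph_add0 (U V : zmodType) (f : U -> V) : {morph f : x y / x + y} -> f 0 = 0.
Proof. by move=> fD; apply: (addrI (f 0)); rewrite -fD !addr0. Qed.

Lemma star0 A : star (0 : A) = 0.
Proof. exact: morph_add0 (@sa_starD _ A). Qed.

Lemma star1 A : star (1 : A) = 1.
Proof. by have := @sa_starM _ A (star 1) 1; rewrite mulr1 !sa_starK mulr1 => /esym. Qed.

Lemma star_prod A (s : seq A) :
  star (\prod_(x <- s) x) = \prod_(x <- rev (map (sa_star A) s)) x.
Proof.
elim: s => [|x s IH]; first by rewrite big_nil star1.
by rewrite big_cons sa_starM IH /= rev_cons -cats1 big_cat big_seq1.
Qed.

Section Homs.
Variables (A B : starAlg C) (f : A -> B).

Lemma star_homD : unital_star_hom f -> {morph f : x y / x + y}.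
Proof. by case. Qed.
Lemma star_homZ : unital_star_hom f -> forall c x, f (c *: x) = c *: f x.
Proof. by case. Qed.
Lemma star_homM : unital_star_hom f -> {morph f : x y / x * y}.
Proof. by case. Qed.
Lemma star_hom1 : unital_star_hom f -> f 1 = 1.
Proof. by case. Qed.
Lemma star_homS : unital_star_hom f -> forall x, f (star x) = star (f x).
Proof. by case. Qed.

Lemma star_homB : unital_star_hom f -> forall x y, f (x - y) = f x - f y.
Proof.
by move=> hf x y; apply/eqP; rewrite eq_sym subr_eq -(star_homD hf) subrK.
Qed.

Variable p : B.
Lemma corner_homD : corner_star_hom p f -> {morph f : x y / x + y}.
Proof. by case. Qed.
Lemma corner_homM : corner_star_hom p f -> {morph f : x y / x * y}.
Proof. by case. Qed.
Lemma corner_homS : corner_star_hom p f -> forall x, f (star x) = star (f x).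
Proof. by case. Qed.

Lemma corner_hom_sum (I : Type) (r : seq I) (F : I -> A) :
  corner_star_hom p f -> f (\sum_(i <- r) F i) = \sum_(i <- r) f (F i).
Proof. by move=> hf; apply: (big_morph f (corner_homD hf) (morph_add0 (corner_homD hf))). Qed.

Lemma corner_hom_comp (W : starAlg C) (g : W -> A) :
  unital_star_hom g -> corner_star_hom p f -> corner_star_hom p (f \o g).
Proof.
move=> [gD gZ gM g1 gS] [fD fZ fM f1 fS].
by split=> /= [x y|c x|x y||x]; rewrite ?gD ?fD ?gZ ?fZ ?gM ?fM ?g1 ?f1 ?gS ?fS.
Qed.
End Homs.

Section LinFun.
Variables (A : starAlg C) (phi : A -> C).
Hypothesis phi_lin : lin_functional phi.

Lemma lin_funD : {morph phi : x y / x + y}. Proof. by case: phi_lin. Qed.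
Lemma lin_funZ c x : phi (c *: x) = c * phi x. Proof. by case: phi_lin. Qed.
Lemma lin_fun0 : phi 0 = 0. Proof. exact: morph_add0 lin_funD. Qed.
Lemma lin_funB x y : phi (x - y) = phi x - phi y.
Proof. by rewrite -scaleN1r lin_funD lin_funZ mulN1r. Qed.
End LinFun.

End StarAlgebraFacts.

(** * Induction on U_n^{nc} *)

Section SubStarAlgebra.
Variables (C : numClosedFieldType) (A : starAlg C) (P : A -> Prop).
Hypotheses (P1 : P 1) (PD : forall x y, P x -> P y -> P (x + y))
  (PZ : forall (c : C) x, P x -> P (c *: x)) (PM : forall x y, P x -> P y -> P (x * y))
  (PS : forall x, P x -> P (star x)).

Definition subalg_pred : pred A := fun x => `[< P x >].

Lemma subalg_pred_closed : GRing.subsemialg_closed subalg_pred.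
Proof.
have inP x : (x \in subalg_pred) = `[< P x >] by [].
split; first by rewrite inP; apply/asboolP.
- split; first by rewrite inP; apply/asboolP; rewrite -(scale0r 1); apply: PZ.
  by move=> x y; rewrite !inP => /asboolP Px /asboolP Py; apply/asboolP; apply: PD.
- by move=> c x; rewrite !inP => /asboolP Px; apply/asboolP; apply: PZ.
- by move=> x y; rewrite !inP => /asboolP Px /asboolP Py; apply/asboolP; apply: PM.
Qed.

Definition subalg := {x : A | subalg_pred x}.
HB.instance Definition _ := [isSub of subalg for @sval A subalg_pred].
HB.instance Definition _ := [Choice of subalg by <:].
HB.instance Definition _ :=
  GRing.SubChoice_isSubAlgebra.Build C A subalg_pred subalg subalg_pred_closed.

Lemma subalg_star_subproof (x : subalg) : subalg_pred (star (val x)).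
Proof. by apply/asboolP; apply: PS; apply/asboolP; exact: valP x. Qed.

Definition subalg_star (x : subalg) : subalg := exist _ (star (val x)) (subalg_star_subproof x).

Lemma subalg_starK : involutive subalg_star.
Proof. by move=> x; apply: val_inj; rewrite /= sa_starK. Qed.
Lemma subalg_starD x y : subalg_star (x + y) = subalg_star x + subalg_star y.
Proof. by apply: val_inj; rewrite /= sa_starD. Qed.
Lemma subalg_starZ (c : C) x : subalg_star (c *: x) = Num.conj c *: subalg_star x.
Proof. by apply: val_inj; rewrite /= sa_starZ. Qed.
Lemma subalg_starM x y : subalg_star (x * y) = subalg_star y * subalg_star x.
Proof. by apply: val_inj; rewrite /= sa_starM. Qed.

Definition sub_starAlg : starAlg C :=
  StarAlg subalg_starK subalg_starD subalg_starZ subalg_starM.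

End SubStarAlgebra.

(* The unital *-subalgebra generated by the u_ij
   satisfies the relations, so universality maps U_m^{nc} into it, and
   uniqueness makes the composite with the inclusion the identity. *)
Lemma Unc_ind (C : numClosedFieldType) (m : nat) (Un : starAlg C)
  (u : 'I_m -> 'I_m -> Un) (P : Un -> Prop) :
  is_Unc u ->
  P 1 -> (forall x y, P x -> P y -> P (x + y)) ->
  (forall (c : C) x, P x -> P (c *: x)) ->
  (forall x y, P x -> P y -> P (x * y)) ->
  (forall x, P x -> P (star x)) ->
  (forall i j, P (u i j)) -> forall x, P x.
Proof.
move=> [u_rel u_univ] P1 PD PZ PM PS Pu.
pose T := sub_starAlg P1 PD PZ PM PS.
have Pu' i j : subalg_pred P (u i j) by apply/asboolP.
pose v i j : T := exist _ (u i j) (Pu' i j).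
have val_sum (r : seq 'I_m) (F : 'I_m -> T) :
    val (\sum_(k <- r) F k) = \sum_(k <- r) val (F k).
  by elim: r => [|k r IH]; rewrite ?big_nil ?big_cons //= -IH.
have v_rel : unitary_rel v.
  by case: u_rel => u1 u2; split=> i j; apply: val_inj; rewrite val_sum ?u1 ?u2; case: eqP.
have [h [[[hD hZ hM h1 hS] hu] _]] := u_univ T v v_rel.
have [g [_ g_uniq]] := u_univ Un u u_rel.
have val_h : g = val \o h.
  by apply: g_uniq; split=> [|i j]; [split=> /= [x y|c x|x y||x] | rewrite /= hu];
     rewrite ?hD ?hZ ?hM ?h1 ?hS.
have id_h : g = id by apply: g_uniq.
by move=> x; apply/asboolP; rewrite -[x]/(id x) -id_h val_h; exact: valP (h x).
Qed.

Lemma corner_hom_eq (C : numClosedFieldType) (m : nat) (Un B : starAlg C)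
  (u : 'I_m -> 'I_m -> Un) (p : B) (f g : Un -> B) :
  is_Unc u -> corner_star_hom p f -> corner_star_hom p g ->
  (forall i j, f (u i j) = g (u i j)) -> f =1 g.
Proof.
move=> hu [fD fZ fM f1 fS] [gD gZ gM g1 gS].
apply: (Unc_ind (P := fun x => f x = g x) hu) => [|x y|c x|x y|x] //;
  by rewrite ?fD ?gD ?fZ ?gZ ?fM ?gM ?f1 ?g1 ?fS ?gS => // -> // ->.
Qed.

Section MatrixUnits.
Variables (C : numClosedFieldType) (n : nat).
Local Notation E := (@Eu C n).

Lemma star_Eu i j : star (E i j) = E j i.
Proof. by apply/matrixP => a b; rewrite !mxE conjC_nat andbC. Qed.

Lemma mul_Eu i j k : E i j * E j k = E i k.
Proof. by rewrite /Eu -mulmxE mul_delta_mx. Qed.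

Lemma sum_Eu : \sum_(k < n.+1) E k k = 1.
Proof. by rewrite /Eu -(mx1_sum_delta C n.+1). Qed.

Lemma Eu00_compress (M : Mstar C n) : E ord0 ord0 * M * E ord0 ord0 = M ord0 ord0 *: E ord0 ord0.
Proof.
rewrite /Eu -!mulmxE; apply/matrixP => i j; rewrite !mxE.
rewrite (bigD1 ord0) //= big1 => [|k /negbTE k0]; last by rewrite [delta_mx _ _ k j]mxE k0 mulr0.
rewrite addr0 [delta_mx _ _ ord0 j]mxE eqxx mxE (bigD1 ord0) //= big1 => [|k /negbTE k0];
  last by rewrite mxE k0 andbF mul0r.
by rewrite mxE !eqxx andbT addr0; case: (i == ord0); case: (j == ord0);
  rewrite /= ?mulr1 ?mulr0 ?mul0r ?mul1r.
Qed.

Lemma ntr_Eu00 : ntr (E ord0 ord0) = n.+1%:R^-1.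
Proof.
rewrite /ntr /mxtrace (bigD1 ord0) //= big1 => [|k /negbTE k0]; last by rewrite mxE k0.
by rewrite mxE !eqxx addr0 mulr1.
Qed.
End MatrixUnits.

(** * The corner embeddings j_X *)

Section CornerEmbedding.
Variables (C : numClosedFieldType) (n : nat) (A B Un : starAlg C).
Variables (iA : A -> B) (iM : Mstar C n -> B) (u : 'I_n.+1 -> 'I_n.+1 -> Un).
Hypotheses (hA : unital_star_hom iA) (hM : unital_star_hom iM) (hu : is_Unc u).
Local Notation E i j := (iM (Eu C i j)).

Definition corner_embedding (X : A) (j : Un -> B) :=
  corner_star_hom (E ord0 ord0) j /\ forall i k, j (u i k) = E ord0 i * iA X * E k ord0.

Lemma corner_embedding_star X jX jXs (Sigma : Un -> Un) :
  corner_embedding X jX -> corner_embedding (star X) jXs ->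
  unital_star_hom Sigma -> (forall i k, Sigma (u i k) = star (u k i)) ->
  forall x, jXs x = jX (Sigma x).
Proof.
move=> [cX jXu] [cXs jXsu] hS Su.
apply: corner_hom_eq hu cXs (corner_hom_comp hS cX) _ => i k /=.
rewrite Su (corner_homS cX) jXu jXsu !sa_starM -(star_homS hA) -!(star_homS hM).
by rewrite !star_Eu mulrA.
Qed.

Lemma sum_E_col0_row0 : \sum_(k < n.+1) E k ord0 * E ord0 k = 1.
Proof.
under eq_bigr => k _ do rewrite -(star_homM hM) mul_Eu.
by rewrite -(corner_hom_sum _ _ hM) sum_Eu (star_hom1 hM).
Qed.

Lemma corner_embedding_mul X Y jX jY jXY (W : starAlg C) (k1 k2 Delta : Un -> W)
    (h : W -> B) :
  corner_embedding X jX -> corner_embedding Y jY -> corner_embedding (X * Y) jXY ->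
  unital_star_hom Delta ->
  (forall i k, Delta (u i k) = \sum_(l < n.+1) k1 (u i l) * k2 (u l k)) ->
  corner_star_hom (E ord0 ord0) h ->
  (forall x, h (k1 x) = jX x) -> (forall x, h (k2 x) = jY x) ->
  forall x, jXY x = h (Delta x).
Proof.
move=> [_ jXu] [_ jYu] [cXY jXYu] hD Du ch hk1 hk2.
apply: corner_hom_eq hu cXY (corner_hom_comp hD ch) _ => i k /=.
rewrite Du (corner_hom_sum _ _ ch) jXYu (star_homM hA).
under eq_bigr => l _ do rewrite (corner_homM ch) hk1 hk2 jXu jYu.
rewrite (eq_bigr (fun l => E ord0 i * iA X * (E l ord0 * E ord0 l) * iA Y * E k ord0)) =>
  [|l _]; last by rewrite !mulrA.
by rewrite -!mulr_suml -mulr_sumr sum_E_col0_row0 mulr1 mulrA.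
Qed.
End CornerEmbedding.

Lemma mem_cat_mid (T : eqType) (l1 l2 : seq T) x : x \in l1 ++ x :: l2.
Proof. by rewrite mem_cat mem_head orbT. Qed.

Lemma sorted_replace (T : eqType) (R : rel T) (l1 l2 : seq T) (e e' : T) :
  sorted R (l1 ++ e :: l2) ->
  (forall x, R x e -> R x e') -> (forall y, y \in l2 -> R e y -> R e' y) ->
  sorted R (l1 ++ e' :: l2).
Proof.
move=> Rl Rle Rer; have Rer' : path R e l2 -> path R e' l2.
  by case: l2 Rer {Rl} => [|b l2] //= Rer /andP [/(Rer b (mem_head _ _)) -> ->].
case: l1 Rl => [|a l1] /=; first exact: Rer'.
by rewrite !cat_path /= => /and3P [-> /Rle -> /Rer'].
Qed.

Definition alternating (T : Type) (s : seq (bool * T)) := sorted (fun a b => a.1 != b.1) s.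

Lemma alternatingP (T : Type) (x0 : bool * T) (s : seq (bool * T)) :
  reflect (forall k, (k.+1 < size s)%N -> (nth x0 s k).1 != (nth x0 s k.+1).1)
          (alternating s).
Proof. by case: s => [|q s]; [constructor | exact: (pathP x0)]. Qed.

Lemma free_pairP (C : numClosedFieldType) (B : starAlg C) (psi : B -> C)
    (P1 P2 : B -> Prop) :
  free_pair psi P1 P2 <->
  forall s, s != [::] -> alternating s ->
    (forall q, q \in s -> (if q.1 then P1 else P2) q.2 /\ psi q.2 = 0) ->
    psi (\prod_(q <- s) q.2) = 0.
Proof.
split=> [free s s0 /(alternatingP (true, 0)) alt sP | free s s_gt0 alt sP].
  apply: (free s) => // [|k k_lt]; first by case: s s0 {alt sP}.
  by move: (sP _ (mem_nth (true, 0) k_lt)); case: (nth _ s k) => [[] y].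
apply: (free s) => [||q /(nthP (true, 0)) [k k_lt <-]]; first by case: s s_gt0 {alt sP}.
  exact/(alternatingP (true, 0)).
by move: (sP k k_lt); case: (nth _ s k) => [[] y].
Qed.

Section LinearSpan.
Variables (C : numClosedFieldType) (B : starAlg C).
Implicit Types (P Q : B -> Prop) (f : B -> C).

Inductive lspan P : B -> Prop :=
  | lspan0 : lspan P 0
  | lspan_gen x : P x -> lspan P x
  | lspanD x y : lspan P x -> lspan P y -> lspan P (x + y)
  | lspanZ (c : C) x : lspan P x -> lspan P (c *: x).

Lemma lin_fun_lspan0 P f y :
  lin_functional f -> (forall w, P w -> f w = 0) -> lspan P y -> f y = 0.
Proof.
move=> f_lin fP; elim=> [|x /fP //|x z _ fx _ fz|c x _ fx].
- exact: lin_fun0.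
- by rewrite (lin_funD f_lin) fx fz addr0.
- by rewrite (lin_funZ f_lin) fx mulr0.
Qed.

Lemma lspan_sub P Q y : (forall w, P w -> lspan Q w) -> lspan P y -> lspan Q y.
Proof. by move=> PQ; elim=> *; [apply: lspan0 | apply: PQ | apply: lspanD | apply: lspanZ]. Qed.

Lemma lspan_lmul P Q z y :
  (forall w, P w -> lspan Q (z * w)) -> lspan P y -> lspan Q (z * y).
Proof.
move=> PQ; elim=> [|x /PQ //|x w _ hx _ hw|c x _ hx].
- by rewrite mulr0; apply: lspan0.
- by rewrite mulrDr; apply: lspanD.
- by rewrite -scalerAr; apply: lspanZ.
Qed.

Lemma lspan_rmul P Q z y :
  (forall w, P w -> lspan Q (w * z)) -> lspan P y -> lspan Q (y * z).
Proof.
move=> PQ; elim=> [|x /PQ //|x w _ hx _ hw|c x _ hx].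
- by rewrite mul0r; apply: lspan0.
- by rewrite mulrDl; apply: lspanD.
- by rewrite -scalerAl; apply: lspanZ.
Qed.

Lemma lspan_mul P x y : (forall a b, P a -> P b -> P (a * b)) ->
  lspan P x -> lspan P y -> lspan P (x * y).
Proof.
move=> PM sx sy; apply: lspan_rmul sx => a Pa.
by apply: lspan_lmul sy => b Pb; apply/lspan_gen/PM.
Qed.

Lemma lspan_star P x : (forall a, P a -> P (star a)) -> lspan P x -> lspan P (star x).
Proof.
move=> PS; elim=> [|y /PS|y w _ hy _ hw|c y _ hy].
- by rewrite star0; apply: lspan0.
- exact: lspan_gen.
- by rewrite sa_starD; apply: lspanD.
- by rewrite sa_starZ; apply: lspanZ.
Qed.

Lemma lin_fun_prod_lspan0 (W : bool -> B -> Prop) (s : seq (bool * B)) f :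
  (forall q, q \in s -> lspan (W q.1) q.2) -> lin_functional f ->
  (forall s', map fst s' = map fst s -> (forall q, q \in s' -> W q.1 q.2) ->
     f (\prod_(q <- s') q.2) = 0) ->
  f (\prod_(q <- s) q.2) = 0.
Proof.
elim: s f => [|[t y] s IH] f s_span f_lin f_words; first exact: (f_words [::]).
rewrite big_cons /=.
have f_lin_r : lin_functional (fun z => f (z * \prod_(q <- s) q.2)).
  by split=> [a b|c a]; rewrite ?mulrDl ?(lin_funD f_lin) // -scalerAl (lin_funZ f_lin).
apply: (lin_fun_lspan0 f_lin_r) (s_span (t, y) (mem_head _ _)) => w Ww.
have f_lin_l : lin_functional (fun z => f (w * z)).
  by split=> [a b|c a]; rewrite ?mulrDr ?(lin_funD f_lin) // -scalerAr (lin_funZ f_lin).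
apply: IH f_lin_l _ => [q q_s|s' s's Ws']; first by apply: s_span; rewrite inE q_s orbT.
have := f_words ((t, w) :: s'); rewrite big_cons; apply; first by rewrite /= s's.
by move=> q; rewrite inE => /orP [/eqP -> //|/Ws'].
Qed.

End LinearSpan.

(** * Freeness of the corner embeddings *)

Section CornerFreeness.
Variables (C : numClosedFieldType) (n : nat) (A B : starAlg C).
Variables (phi : A -> C) (psi : B -> C) (iA : A -> B) (iM : Mstar C n -> B).
Variable X : bool -> A.
Hypotheses (hA : unital_star_hom iA) (hM : unital_star_hom iM).
Hypotheses (phi_lin : lin_functional phi) (phi1 : phi 1 = 1).
Hypothesis psi_fp : is_free_product_state iA iM phi (@ntr C n) psi.
Local Notation S t := (genStar (fun x => x = X t)).
Hypothesis free_X : free_pair phi (S true) (S false).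

Let psi_lin : lin_functional psi. Proof. by case: psi_fp. Qed.
Let psi1 : psi 1 = 1. Proof. by case: psi_fp. Qed.
Let psi_iA x : psi (iA x) = phi x. Proof. by case: psi_fp. Qed.
Let psi_iM x : psi (iM x) = ntr x. Proof. by case: psi_fp. Qed.
Let free_AM : free_pair psi (range iA) (range iM). Proof. by case: psi_fp. Qed.

Local Notation inM := (range iM).

Lemma inM1 : inM 1.
Proof. by exists 1; rewrite (star_hom1 hM). Qed.

Lemma inMM x y : inM x -> inM y -> inM (x * y).
Proof. by move=> [a ->] [b ->]; exists (a * b); rewrite (star_homM hM). Qed.

Lemma inM_center m : inM m -> inM (m - psi m *: 1) /\ psi (m - psi m *: 1) = 0.
Proof.
move=> [a ->]; split; last by rewrite (lin_funB psi_lin) (lin_funZ psi_lin) psi1 mulr1 subrr.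
by exists (a - psi (iM a) *: 1); rewrite (star_homB hM) (star_homZ hM) (star_hom1 hM).
Qed.

Definition centered_A t z := exists a, [/\ S t a, phi a = 0 & z = iA a].

Lemma S_center t a :
  S t a -> centered_A t (iA (a - phi a *: 1)) /\ iA a = iA (a - phi a *: 1) + phi a *: 1.
Proof.
move=> Sa; split; last by rewrite (star_homB hA) (star_homZ hA) (star_hom1 hA) subrK.
exists (a - phi a *: 1); split => //.
  by apply: genStar_add Sa _; rewrite -scaleN1r scalerA; apply/genStar_scale/genStar_1.
by rewrite (lin_funB phi_lin) (lin_funZ phi_lin) phi1 mulr1 subrr.
Qed.

(* A word [word_val m0 l] is [m0 x_1 m_1 x_2 m_2 ... x_k m_k] with letters
   [(t_i, x_i, m_i)]: [x_i] is a centered element of [iA (S t_i)] and [m_i] an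
   optional element of [iM] ([None] standing for an absent letter).  Two
   consecutive [x]'s of the same colour must be separated by a centered [m]. *)
Definition letter := (bool * B * option B)%type.

Definition word_val (m0 : option B) (l : seq letter) :=
  odflt 1 m0 * \prod_(e <- l) (e.1.2 * odflt 1 e.2).

Definition inM_opt (o : option B) := forall m, o = Some m -> inM m.

Definition centered_opt (o : option B) := if o is Some m then psi m == 0 else false.

Definition link : rel letter := fun e e' => (e.1.1 == e'.1.1) ==> centered_opt e.2.

Definition is_word m0 l :=
  [/\ inM_opt m0, forall e, e \in l -> centered_A e.1.1 e.1.2 /\ inM_opt e.2,
      sorted link l & l != [::]].

Definition noncentered_opt (o : option B) : nat := if o is Some m then psi m != 0 else 0.

Definition noncentered m0 (l : seq letter) :=
  (noncentered_opt m0 + \sum_(e <- l) noncentered_opt e.2)%N.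

Lemma inM_odflt o : inM_opt o -> inM (odflt 1 o).
Proof. by case: o => [m|] inMo /=; [apply: inMo | apply: inM1]. Qed.

(* Regroups a word whose M-letters are all centered into alternating [iA]- and
   [iM]-factors, to which freeness of [iA] and [iM] applies: consecutive
   A-letters with no M-letter in between are multiplied together. *)
Fixpoint runs (l : seq letter) : seq (bool * B) :=
  if l is e :: l' then
    if e.2 is Some m then (true, e.1.2) :: (false, m) :: runs l'
    else match runs l' with
         | (true, y) :: r => (true, e.1.2 * y) :: r
         | r => (true, e.1.2) :: r
         end
  else [::].

Lemma prod_runs l : \prod_(q <- runs l) q.2 = \prod_(e <- l) (e.1.2 * odflt 1 e.2).
Proof.
elim: l => [|[[t x] [m|]] l IH] /=; rewrite ?big_nil // big_cons /=.
  by rewrite !big_cons /= IH mulrA.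
move: IH; case: (runs l) => [|[[] y] r] <- /=; rewrite !big_cons ?big_nil /= ?mulr1 //.
by rewrite mulrA.
Qed.

Definition alt_prod_A (y : B) (t : bool) := exists r : seq (bool * A),
  [/\ (head (t, 0) r).1 = t, r != [::], alternating r,
      forall q, q \in r -> S q.1 q.2 /\ phi q.2 = 0 & y = iA (\prod_(q <- r) q.2)].

Lemma psi_alt_prod_A y t : alt_prod_A y t -> range iA y /\ psi y = 0.
Proof.
move=> [r [_ r0 alt_r r_cent ->]]; split; first by eexists.
rewrite psi_iA; apply: (proj1 (free_pairP _ _ _) free_X r r0 alt_r) => -[[] a] /r_cent //.
Qed.

Definition centered_factor (q : bool * B) :=
  (if q.1 then range iA else inM) q.2 /\ psi q.2 = 0.

Definition centered_word (l : seq letter) :=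
  (forall e, e \in l ->
     centered_A e.1.1 e.1.2 /\ forall m, e.2 = Some m -> inM m /\ psi m = 0) /\
  sorted link l.

Lemma alt_prod_A_cons t t' a y :
  t != t' -> S t a -> phi a = 0 -> alt_prod_A y t' -> alt_prod_A (iA a * y) t.
Proof.
move=> tt' Sa pa [r [head_r r0 alt_r r_cent ->]].
exists ((t, a) :: r); split => //.
- by case: r head_r r0 alt_r {r_cent} => [|q r] //= -> _ ->; rewrite andbT.
- by move=> q; rewrite inE => /orP [/eqP -> // | /r_cent].
- by rewrite big_cons (star_homM hA).
Qed.

Definition runs_ok l :=
  [/\ alternating (runs l), forall q, q \in runs l -> centered_factor q &
      l = [::] \/ exists y r, runs l = (true, y) :: r /\ alt_prod_A y (head (true, 0, None) l).1.1].

Lemma centered_word_runs l : centered_word l -> runs_ok l.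
Proof.
elim: l => [|[[t x] o] l IH]; first by split => //; left.
move=> [l_cent l_link].
have [alt_l cent_l head_l] : runs_ok l.
  apply: IH; split; last exact: path_sorted l_link.
  by move=> e le; apply: l_cent; rewrite inE le orbT.
have /= [[a [Sa pa ->]] o_cent] := l_cent _ (mem_head _ _).
have alt_a : alt_prod_A (iA a) t.
  exists [:: (t, a)]; split => //=; last by rewrite big_seq1.
  by move=> q; rewrite inE => /eqP -> /=.
have cent_a : centered_factor (true, iA a) by apply: psi_alt_prod_A alt_a.
case: o l_cent l_link o_cent => [m|] l_cent l_link o_cent /=.
  have [inMm pm] := o_cent m erefl.
  split; last by right; exists (iA a), ((false, m) :: runs l).
  - by case: head_l alt_l => [->|[y [r [runs_l _]]]] //=; rewrite runs_l /= => ->.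
  - by move=> q; rewrite !inE => /or3P [/eqP -> | /eqP -> | /cent_l].
case: head_l => [l0 | [y [r [runs_l alt_y]]]].
  by subst l; split => //; [move=> q; rewrite inE => /eqP -> | right; exists (iA a), [::]].
case: l l_cent l_link runs_l alt_y alt_l cent_l {IH} => [|[[t' x'] o'] l] //= l_cent.
move=> /andP [link_t _] runs_l alt_y; rewrite /runs_ok /= runs_l => alt_yr cent_yr.
have alt_ay : alt_prod_A (iA a * y) t.
  by apply: alt_prod_A_cons alt_y => //; move: link_t; rewrite /link /= implybF.
split; last by right; exists (iA a * y), r.
- by case: r alt_yr {runs_l cent_yr}.
- move=> q; rewrite inE => /orP [/eqP -> | q_r]; first exact: psi_alt_prod_A alt_ay.
  by apply: cent_yr; rewrite inE q_r orbT.
Qed.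

Lemma psi_word_centered m0 l : is_word m0 l -> noncentered m0 l = 0%N -> psi (word_val m0 l) = 0.
Proof.
move=> [m0M l_cent l_link l0] /eqP; rewrite /noncentered addn_eq0 sum_nat_seq_eq0.
move=> /andP [m0_cent /allP l_noncent].
have l_centered : centered_word l.
  split=> // e le; have [eA eM] := l_cent e le; split=> // m em; split; first exact: eM.
  by have := l_noncent e le; rewrite em /= eqb0 negbK => /eqP.
have [alt_l cent_l [l0'|[y [r [runs_l _]]]]] := centered_word_runs l_centered.
  by rewrite l0' in l0.
pose s := if m0 is Some m then (false, m) :: runs l else runs l.
have -> : word_val m0 l = \prod_(q <- s) q.2.
  by rewrite /word_val -prod_runs /s; case: (m0) => [m|] /=; rewrite ?big_cons ?mul1r.
apply: (proj1 (free_pairP _ _ _) free_AM) => [||q].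
- by rewrite /s runs_l; case: (m0).
- by rewrite /s; case: (m0) => // m; move: alt_l; rewrite runs_l /alternating /= => ->.
rewrite /s; case: (m0) m0M m0_cent => [m|] m0M m0_cent; last exact: cent_l.
rewrite inE => /orP [/eqP -> /= | /cent_l //]; split; first exact: m0M.
by move: m0_cent; rewrite /= eqb0 negbK => /eqP.
Qed.

Lemma word_val_split_head m l (c : C) :
  word_val (Some m) l = word_val (Some (m - c *: 1)) l + c *: word_val None l.
Proof. by rewrite /word_val /= scalerAl -mulrDl subrK. Qed.

Lemma word_val_split m0 l1 t x m l2 (c : C) :
  word_val m0 (l1 ++ (t, x, Some m) :: l2) =
  word_val m0 (l1 ++ (t, x, Some (m - c *: 1)) :: l2) + c *: word_val m0 (l1 ++ (t, x, None) :: l2).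
Proof.
rewrite /word_val !big_cat !big_cons /= -[m in LHS](subrK (c *: 1)).
by rewrite !(mulrDr, mulrDl) -!(scalerAl, scalerAr) mulr1.
Qed.

Lemma noncentered_cat m0 l1 e l2 :
  noncentered m0 (l1 ++ e :: l2) = (noncentered_opt e.2 + noncentered m0 (l1 ++ l2))%N.
Proof.
rewrite /noncentered !big_cat big_cons /=.
by rewrite [in RHS]addnCA [in RHS](addnCA (noncentered_opt e.2)).
Qed.

Lemma is_word_replace m0 l1 e e' l2 :
  is_word m0 (l1 ++ e :: l2) -> centered_A e'.1.1 e'.1.2 -> inM_opt e'.2 ->
  (forall y, link y e -> link y e') -> (forall y, y \in l2 -> link e y -> link e' y) ->
  is_word m0 (l1 ++ e' :: l2).
Proof.
move=> [m0M l_cent l_link _] e'A e'M le le'; split => //; last by case: (l1).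
  move=> f; rewrite !mem_cat !inE => /or3P [f_l1|/eqP -> //|f_l2]; apply: l_cent.
    by rewrite mem_cat f_l1.
  by rewrite mem_cat inE f_l2 !orbT.
exact: sorted_replace l_link le le'.
Qed.

Lemma is_word_center_letter m0 l1 t x m l2 :
  is_word m0 (l1 ++ (t, x, Some m) :: l2) ->
  is_word m0 (l1 ++ (t, x, Some (m - psi m *: 1)) :: l2).
Proof.
move=> wl; have [_ l_cent _ _] := wl.
have [xA mM] := l_cent _ (mem_cat_mid l1 l2 (t, x, Some m)).
have [m'M m'c] := inM_center (mM m erefl).
apply: (is_word_replace (e' := (t, x, Some (m - psi m *: 1))) wl xA) => // [m' [<-] //|y _].
by rewrite /link /= m'c eqxx implybT.
Qed.

Lemma is_word_drop_letter m0 l1 t x m l2 :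
  is_word m0 (l1 ++ (t, x, Some m) :: l2) -> psi m != 0 ->
  is_word m0 (l1 ++ (t, x, None) :: l2).
Proof.
move=> wl pm; have [_ l_cent _ _] := wl.
have [xA _] := l_cent _ (mem_cat_mid l1 l2 (t, x, Some m)).
apply: (is_word_replace (e' := (t, x, None)) wl xA) => // y _.
by rewrite /link /= (negbTE pm).
Qed.

(* Induction on the number of non-centered M-letters: writing such a letter
   as [m = (m - psi m) + psi m] yields one word with that letter centered and
   one where it is absent; in the latter the neighbouring A-letters have
   different colours, so it is still a word. *)
Lemma psi_word m0 l : is_word m0 l -> psi (word_val m0 l) = 0.
Proof.
have [k] := ubnP (noncentered m0 l); elim: k m0 l => // k IH m0 l.
rewrite ltnS => nc_k wl; have [m0M l_cent l_link l0] := wl.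
have [nc0|nc_gt0] := posnP (noncentered m0 l); first exact: psi_word_centered.
case: (posnP (noncentered_opt m0)) => [m0_c | ].
  move: nc_gt0; rewrite /noncentered m0_c add0n lt0n sum_nat_seq_neq0.
  case/hasP => -[[t x] [m|]] //= e_l pm.
  case/splitPr: e_l l_cent wl nc_k => l1 l2 l_cent wl.
  have {}pm : psi m != 0 by case: (psi m != 0) pm.
  rewrite noncentered_cat /= pm add1n => nc_k.
  rewrite (@word_val_split _ _ _ _ _ _ (psi m)) (lin_funD psi_lin) (lin_funZ psi_lin).
  have [_ m'c] := inM_center (proj2 (l_cent _ (mem_cat_mid l1 l2 (t, x, Some m))) m erefl).
  rewrite !IH ?mulr0 ?addr0 ?noncentered_cat /= ?m'c ?eqxx ?add0n //.
  - exact: is_word_drop_letter wl pm.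
  - exact: is_word_center_letter wl.
case: m0 m0M wl nc_k {nc_gt0} => [m|] //= m0M wl; rewrite lt0b => nc_k pm.
have [m'M m'c] := inM_center (m0M m erefl).
rewrite (@word_val_split_head _ _ (psi m)) (lin_funD psi_lin) (lin_funZ psi_lin).
rewrite !IH ?mulr0 ?addr0 //; last by split=> // m' [<-].
  by move: nc_k; rewrite /noncentered /= pm.
by move: nc_k; rewrite /noncentered /= m'c eqxx pm.
Qed.

Definition word_of t w :=
  exists m0 l, [/\ w = word_val m0 l, is_word m0 l & all (fun e => e.1.1 == t) l].

Definition join_letter (e : letter) (o : option B) : letter :=
  (e.1.1, e.1.2, Some (odflt 1 e.2 * odflt 1 o)).

Lemma word_val_mul m0 l1 e m0' l' :
  word_val m0 (rcons l1 e) * word_val m0' l' = word_val m0 (l1 ++ join_letter e m0' :: l').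
Proof.
rewrite /word_val -cats1 !big_cat !big_cons big_nil /= mulr1.
by rewrite !mulrA.
Qed.

Lemma is_word_mul m0 l1 e m0' l' :
  is_word m0 (rcons l1 e) -> is_word m0' l' -> e.1.1 != (head e l').1.1 ->
  is_word m0 (l1 ++ join_letter e m0' :: l').
Proof.
move=> [m0M l_cent l_link _] [m0'M l'_cent l'_link l'0] colour_e.
have [eA eM] : centered_A e.1.1 e.1.2 /\ inM_opt e.2 by apply: l_cent; rewrite mem_rcons mem_head.
split=> //; last by case: (l1).
- move=> f; rewrite mem_cat inE => /or3P [f_l1|/eqP -> /=|/l'_cent //].
    by apply: l_cent; rewrite mem_rcons inE f_l1 orbT.
  by split=> // m [<-]; apply: inMM; apply: inM_odflt.
- rewrite sorted_cat_cons; apply/andP; split.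
    by case: (l1) l_link => [|f l1'] //=; rewrite !rcons_path.
  by case: l' l'_link l'0 colour_e {l'_cent} => [|f l'] //= -> _; rewrite /link /= => /negbTE ->.
Qed.

Lemma word_of_rcons t w : word_of t w -> exists m0 l1 e,
  [/\ w = word_val m0 (rcons l1 e), is_word m0 (rcons l1 e) &
      all (fun f => f.1.1 == t) (rcons l1 e)].
Proof.
move=> [m0 [l [-> wl col_l]]]; have [_ _ _ l0] := wl.
by case/lastP: l l0 wl col_l => [|l1 e] // _; exists m0, l1, e.
Qed.

Lemma alt_prod_word_of s : s != [::] -> alternating s -> (forall q, q \in s -> word_of q.1 q.2) ->
  exists m0 l, [/\ \prod_(q <- s) q.2 = word_val m0 l, is_word m0 l &
                   (head (true, 0, None) l).1.1 = (head (true, 0) s).1].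
Proof.
elim: s => [|[t w] s IH] // _ alt_s s_words.
have [m0 [l1 [e [w_eq wl]]]] := word_of_rcons (s_words _ (mem_head _ _)).
rewrite all_rcons => /andP [/eqP col_e col_l1].
rewrite /= in w_eq.
have head_col : (head (true, 0, None) (rcons l1 e)).1.1 = t.
  by case: (l1) col_l1 => //= f l1' /andP [/eqP].
case: s IH alt_s s_words => [|[t' w'] s] IH alt_s s_words.
  by exists m0, (rcons l1 e); rewrite big_seq1 w_eq.
have [m0' [l' [prod_eq wl' col_l']]] : exists m0 l,
    [/\ \prod_(q <- (t', w') :: s) q.2 = word_val m0 l, is_word m0 l &
         (head (true, 0, None) l).1.1 = t'].
  apply: IH => [||q q_s] //; first exact: path_sorted alt_s.
  by apply: s_words; rewrite inE q_s orbT.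
have tt' : t != t' by case/andP: alt_s.
exists m0, (l1 ++ join_letter e m0' :: l'); split.
- by rewrite big_cons w_eq prod_eq word_val_mul.
- have [_ _ _ l'0] := wl'; apply: is_word_mul wl wl' _; rewrite col_e.
  by case: l' col_l' l'0 {prod_eq} => [|f l'] //= ->.
- by case: (l1) col_l1 => //= f l1' /andP [/eqP].
Qed.

Lemma is_word_cons m0 e l :
  is_word m0 l -> centered_A e.1.1 e.1.2 -> inM_opt e.2 -> link e (head e l) ->
  is_word None (e :: l).
Proof.
move=> [_ l_cent l_link l0] eA eM e_link; split=> //.
- by move=> f; rewrite inE => /orP [/eqP -> //|/l_cent].
- by case: l l0 e_link l_link {l_cent} => [|f l] //= _ ->.
Qed.

Lemma is_word_behead m0 e l :
  is_word m0 (e :: l) -> l != [::] -> is_word (Some (odflt 1 e.2)) l.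
Proof.
move=> [_ l_cent l_link _] l0; split=> //.
- by move=> m [<-]; apply: inM_odflt; apply: (proj2 (l_cent e (mem_head _ _))).
- by move=> f f_l; apply: l_cent; rewrite inE f_l orbT.
- exact: path_sorted l_link.
Qed.

Definition normal_form t w := inM w \/ word_of t w.

Definition generator t z := inM z \/ exists a, S t a /\ z = iA a.

Lemma inM_mul_word_of t z w : inM z -> word_of t w -> word_of t (z * w).
Proof.
move=> zM [m0 [l [-> [m0M l_cent l_link l0] col_l]]].
exists (Some (z * odflt 1 m0)), l; split=> //; first by rewrite /word_val /= mulrA.
by split=> // m [<-]; apply: inMM zM (inM_odflt m0M).
Qed.

(* [a w] for a centered [a] in [S t]: the M-prefix [m] of [w] is split into
   its centered part and [psi m]; the latter multiplies [a] with the first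
   A-letter [a1] of [w], and [a a1] is split again into centered part and
   [phi (a a1)]. *)
Lemma centered_A_mul_word_of t a w :
  S t a -> phi a = 0 -> word_of t w -> lspan (normal_form t) (iA a * w).
Proof.
move=> Sa pa [m0 [l [-> wl col_l]]]; have [m0M l_cent l_link l0] := wl.
case: l l_cent l_link l0 col_l wl => [|[[t1 x1] o1] l'] // l_cent l_link _.
move=> /andP [/eqP /= t1t col_l'] wl.
have /= [[a1 [Sa1 _ x1_eq]] o1M] := l_cent _ (mem_head _ _); subst t1 x1.
set m := odflt 1 m0; have [m'M m'c] := inM_center (inM_odflt m0M).
have [bA b_eq] := S_center (genStar_mul Sa Sa1).
set m' := m - psi m *: 1 in m'M m'c *; set d := phi (a * a1) in b_eq *.
set b := iA (a * a1 - d *: 1) in bA b_eq *.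
set rest := \prod_(e <- l') (e.1.2 * odflt 1 e.2).
have -> : iA a * word_val m0 ((t, iA a1, o1) :: l') =
    word_val None ((t, iA a, Some m') :: (t, iA a1, o1) :: l') +
    psi m *: (word_val None ((t, b, o1) :: l') + d *: (odflt 1 o1 * rest)).
  rewrite /word_val !big_cons /= -/m -/rest !mul1r -[m in LHS](subrK (psi m *: 1)) -/m'.
  rewrite mulrDl mulrDr !mulrA; congr (_ + _).
  rewrite -scalerAr mulr1 -!scalerAl; congr (_ *: _).
  by rewrite -(star_homM hA) b_eq !mulrDl -!scalerAl mul1r.
apply: lspanD; last (apply: lspanZ; apply: lspanD; last apply: lspanZ).
- apply: lspan_gen; right; exists None, ((t, iA a, Some m') :: (t, iA a1, o1) :: l'); split=> //=.
    apply: (is_word_cons wl) => /=; first by exists a.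
      by move=> m'' [<-].
    by rewrite /link /= m'c !eqxx.
  by rewrite !eqxx.
- apply: lspan_gen; right; exists None, ((t, b, o1) :: l'); split => //=; last by rewrite eqxx.
  exact: (@is_word_replace _ [::] (t, iA a1, o1)).
- rewrite {}/rest; case: l' col_l' wl {l_cent l_link} => [|e2 l2] col_l' wl.
    by rewrite big_nil mulr1; apply: lspan_gen; left; apply: inM_odflt.
  apply: lspan_gen; right; exists (Some (odflt 1 o1)), (e2 :: l2); split=> //.
  exact: is_word_behead wl _.
Qed.

Lemma generator_mul_normal_form t z w :
  generator t z -> normal_form t w -> lspan (normal_form t) (z * w).
Proof.
move=> [zM|[a [Sa ->]]] w_nf.
  apply: lspan_gen; case: w_nf => [wM|w_word]; first by left; apply: inMM.
  by right; apply: inM_mul_word_of.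
have [[a' [Sa' pa' ->]] ->] := S_center Sa.
rewrite mulrDl -scalerAl mul1r; apply: lspanD; last exact/lspanZ/lspan_gen.
case: w_nf => [wM|]; last exact: centered_A_mul_word_of.
apply: lspan_gen; right; exists None, [:: (t, iA a', Some w)]; split.
- by rewrite /word_val big_seq1 mul1r.
- by split=> // e; rewrite inE => /eqP -> /=; split; [exists a' | move=> m [<-]].
- by rewrite /= eqxx.
Qed.

Lemma prod_generator_normal_form t (s : seq B) :
  (forall z, z \in s -> generator t z) -> lspan (normal_form t) (\prod_(z <- s) z).
Proof.
elim: s => [|z s IH] s_gen; first by rewrite big_nil; apply: lspan_gen; left; apply: inM1.
rewrite big_cons; apply: lspan_lmul (IH _) => [w w_nf|y y_s].
  by apply: generator_mul_normal_form w_nf; apply: s_gen; rewrite mem_head.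
by apply: s_gen; rewrite inE y_s orbT.
Qed.

Lemma word_of_mul_inM t w z : word_of t w -> inM z -> word_of t (w * z).
Proof.
move=> /word_of_rcons [m0 [l1 [e [-> wl col_l]]]] zM.
have [_ l_cent _ _] := wl.
have [eA eM] : centered_A e.1.1 e.1.2 /\ inM_opt e.2 by apply: l_cent; rewrite mem_rcons mem_head.
exists m0, (rcons l1 (join_letter e (Some z))); split.
- by rewrite /word_val -!cats1 !big_cat !big_cons !big_nil /= !mulr1 !mulrA.
- rewrite -cats1; apply: (is_word_replace (e := e)); rewrite ?cats1 //.
  + by move=> m [<-]; apply: inMM (inM_odflt eM) zM.
- by move: col_l; rewrite !all_rcons.
Qed.

Lemma psi_word_of t w : word_of t w -> psi w = 0.
Proof. by move=> [m0 [l [-> wl _]]]; apply: psi_word. Qed.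

Local Notation p := (iM (Eu C ord0 ord0)).

Lemma compress_normal_form t y : lspan (normal_form t) y ->
  exists c z, p * y * p = c *: p + z /\ lspan (word_of t) z.
Proof.
elim=> [|w [[M ->]|w_word]|x x' _ [c [z [xe z_span]]] _ [c' [z' [x'e z'_span]]]|
        c' x _ [c [z [xe z_span]]]].
- by exists 0, 0; rewrite mulr0 mul0r scale0r addr0; split=> //; apply: lspan0.
- exists (M ord0 ord0), 0; rewrite addr0 -!(star_homM hM) Eu00_compress (star_homZ hM).
  by split=> //; apply: lspan0.
- exists 0, (p * w * p); rewrite scale0r add0r; split=> //; apply: lspan_gen.
  have pM : inM p by exists (Eu C ord0 ord0).
  exact: word_of_mul_inM (inM_mul_word_of pM w_word) pM.
- exists (c + c'), (z + z'); split; last exact: lspanD.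
  by rewrite mulrDr mulrDl xe x'e scalerDl addrACA.
- exists (c' * c), (c' *: z); split; last exact: lspanZ.
  by rewrite -scalerAr -scalerAl xe scalerDr scalerA.
Qed.

Lemma corner_centered_lspan t y :
  p * y * p = y -> lspan (normal_form t) y -> psi y = 0 -> lspan (word_of t) y.
Proof.
move=> y_corner /compress_normal_form [c [z [y_eq z_span]]] py.
have pz : psi z = 0 by apply: lin_fun_lspan0 psi_lin _ z_span => w /psi_word_of.
suff c0 : c = 0 by rewrite -y_corner y_eq c0 scale0r add0r.
move: py; rewrite -y_corner y_eq (lin_funD psi_lin) (lin_funZ psi_lin) pz addr0 psi_iM ntr_Eu00.
by move/eqP; rewrite mulf_eq0 invr_eq0 pnatr_eq0 orbF => /eqP.
Qed.

Lemma psi_alt_prod_word_of s : s != [::] -> alternating s ->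
  (forall q, q \in s -> word_of q.1 q.2) -> psi (\prod_(q <- s) q.2) = 0.
Proof.
by move=> s0 alt_s s_words; have [m0 [l [-> wl _]]] := alt_prod_word_of s0 alt_s s_words;
  apply: psi_word.
Qed.

Definition monomial t z :=
  exists s : seq B, z = \prod_(y <- s) y /\ forall y, y \in s -> generator t y.

Lemma monomial_star t z : monomial t z -> monomial t (star z).
Proof.
move=> [s [-> s_gen]]; exists (rev (map (sa_star B) s)); split; first exact: star_prod.
move=> y; rewrite mem_rev => /mapP [z' /s_gen [z'M|[a [Sa ->]]] ->].
  by left; case: z'M => M ->; exists (star M); rewrite (star_homS hM).
by right; exists (star a); split; [apply: genStar_star | rewrite (star_homS hA)].
Qed.

Lemma monomial_mul t z z' : monomial t z -> monomial t z' -> monomial t (z * z').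
Proof.
move=> [s [-> s_gen]] [s' [-> s'_gen]]; exists (s ++ s'); split; first by rewrite big_cat.
by move=> y; rewrite mem_cat => /orP [/s_gen|/s'_gen].
Qed.

Section Embedding.
Variables (Un : starAlg C) (u : 'I_n.+1 -> 'I_n.+1 -> Un) (t : bool) (j : Un -> B).
Hypotheses (hu : is_Unc u) (hj : corner_embedding iA iM u (X t) j).

Lemma corner_embedding_monomial_lspan w : lspan (monomial t) (j w).
Proof.
have [[jD jZ jM j1 jS] ju] := hj.
apply: (Unc_ind (P := fun w => lspan (monomial t) (j w)) hu) => [|x y|c x|x y|x|i k].
- rewrite j1; apply: lspan_gen; exists [:: p]; split; first by rewrite big_seq1.
  by move=> y; rewrite inE => /eqP ->; left; exists (Eu C ord0 ord0).
- by rewrite jD; apply: lspanD.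
- by rewrite jZ; apply: lspanZ.
- by rewrite jM; apply: lspan_mul; apply: monomial_mul.
- by rewrite jS; apply: lspan_star; apply: monomial_star.
rewrite ju; apply: lspan_gen; exists [:: iM (Eu C ord0 i); iA (X t); iM (Eu C k ord0)].
split; first by rewrite !big_cons big_nil mulr1 !mulrA.
move=> y; rewrite !inE => /or3P [/eqP ->|/eqP ->|/eqP ->].
- by left; exists (Eu C ord0 i).
- by right; exists (X t); split=> //; apply: genStar_in.
- by left; exists (Eu C k ord0).
Qed.

Lemma corner_embedding_centered y : range j y -> psi y = 0 -> lspan (word_of t) y.
Proof.
have [[_ _ jM j1 _] _] := hj.
move=> [w ->]; apply: corner_centered_lspan; first by rewrite -j1 -!jM mul1r mulr1.
apply: lspan_sub (corner_embedding_monomial_lspan w) => z [s [-> s_gen]].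
exact: prod_generator_normal_form.
Qed.

End Embedding.

Lemma free_corner_embeddings (Un : starAlg C) (u : 'I_n.+1 -> 'I_n.+1 -> Un) (j : bool -> Un -> B) :
  is_Unc u -> (forall t, corner_embedding iA iM u (X t) (j t)) ->
  free_pair (fun x => n.+1%:R * psi x) (range (j true)) (range (j false)).
Proof.
move=> hu hj; apply/free_pairP => s s0 alt_s s_cent.
apply/eqP; rewrite mulf_eq0 pnatr_eq0 /=; apply/eqP.
have s_span q : q \in s -> lspan (word_of q.1) q.2.
  move=> /s_cent [q_range]; move/eqP; rewrite mulf_eq0 pnatr_eq0 /= => /eqP pq.
  case: q q_range pq => [[] y] /= yr py.
    exact: corner_embedding_centered hu (hj true) y yr py.
  exact: corner_embedding_centered hu (hj false) y yr py.
apply: lin_fun_prod_lspan0 s_span psi_lin _ => s' s's s'_words.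
apply: psi_alt_prod_word_of s'_words.
  by move: s0 s's; case: s {alt_s s_cent}; case: s'.
have alt_map (r : seq (bool * B)) : alternating r = sorted (fun a b : bool => a != b) (map fst r).
  by rewrite sorted_map.
by rewrite alt_map s's -alt_map.
Qed.

End CornerFreeness.

Unset Implicit Arguments. Set Strict Implicit.

Theorem mainTheorem4 (C : numClosedFieldType) (n : nat)
  (A : starAlg C) (phi : A -> C) (U V : A)
  (B : starAlg C) (iA : A -> B) (iM : Mstar C n -> B) (psi : B -> C)
  (Un : starAlg C) (u : 'I_n.+1 -> 'I_n.+1 -> Un)
  (jU jV jUinv jUV : Un -> B) :
  is_state phi -> unitary U -> unitary V ->
  is_free_product iA iM ->
  is_free_product_state iA iM phi (@ntr C n) psi ->
  is_Unc u ->
  let E := fun i j => iM (Eu C i j) in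
  let p := E ord0 ord0 in
  corner_star_hom p jU ->
  (forall i j, jU (u i j) = E ord0 i * iA U * E j ord0) ->
  corner_star_hom p jV ->
  (forall i j, jV (u i j) = E ord0 i * iA V * E j ord0) ->
  corner_star_hom p jUinv ->
  (forall i j, jUinv (u i j) = E ord0 i * iA (star U) * E j ord0) ->
  corner_star_hom p jUV ->
  (forall i j, jUV (u i j) = E ord0 i * iA (U * V) * E j ord0) ->
  [/\ (* (1a)  j_{U^{-1}} = j_U o Sigma *)
      (forall Sigma : Un -> Un,
         unital_star_hom Sigma ->
         (forall i j, Sigma (u i j) = star (u j i)) ->
         forall x, jUinv x = jU (Sigma x)),
      (* (1b)  j_{UV} = j_U * j_V = (j_U |_| j_V) o Delta *)
      (forall (W : starAlg C) (k1 k2 : Un -> W) (Delta : Un -> W) (h : W -> B),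
         is_free_product k1 k2 ->
         unital_star_hom Delta ->
         (forall i j, Delta (u i j) = \sum_(k < n.+1) k1 (u i k) * k2 (u k j)) ->
         corner_star_hom p h ->
         (forall x, h (k1 x) = jU x) ->
         (forall x, h (k2 x) = jV x) ->
         forall x, jUV x = h (Delta x)) &
      (* (2)  freeness is transported *)
      (free_pair phi (genStar (fun x => x = U)) (genStar (fun x => x = V)) ->
       free_pair (fun x => (n.+1)%:R * psi x) (range jU) (range jV))].
Proof.
move=> [phi_lin phi1 _] _ _ [hA hM _] psi_fp hu E p cU jUu cV jVu cUs jUsu cUV jUVu.
have jU_emb : corner_embedding iA iM u U jU by [].
have jV_emb : corner_embedding iA iM u V jV by [].
have jUs_emb : corner_embedding iA iM u (star U) jUinv by [].
have jUV_emb : corner_embedding iA iM u (U * V) jUV by [].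
split.
- move=> Sigma hS Su x; exact (corner_embedding_star hA hM hu jU_emb jUs_emb hS Su x).
- move=> W k1 k2 Delta h _ hD Du ch hk1 hk2 x.
  exact (corner_embedding_mul hA hM hu jU_emb jV_emb jUV_emb hD Du ch hk1 hk2 x).
move=> free_UV.
apply: (@free_corner_embeddings C n A B phi psi iA iM (fun t => if t then U else V)
  hA hM phi_lin phi1 psi_fp free_UV Un u (fun t => if t then jU else jV) hu).
by case.
Qed.
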